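(* Let $\mathcal{X}^{U}=\mathcal{X}^{+,U}\cup\mathcal{X}^{-,U}$ and let $\mathcal{V}$ be the Vervaat transform on $\mathcal{X}^U$. Then $\mathcal{V}:\mathcal{X}^U\to\mathcal{X}^U$ is a bijection with $\theta(\mathcal{V}(x))=\theta(x)$ and $H(\mathcal{V}(x))=-H(x)$; it maps $\mathcal{X}^{+,U}$ into $\mathcal{X}^{-,U}$ and $\mathcal{X}^{-,U}$ into $\mathcal{X}^{+,U}$; its level numbers satisfy $$N_{-h}(\mathcal{V}(x))=N_{H(x)-1-h}(x)\quad\text{for }h=0,\dots,H(x)-1,\text{ when }x\in\mathcal{X}^{+,U},$$ $$N_{-h}(\mathcal{V}(x))=N_{H(x)+1-h}(x)\quad\text{for }h=H(x)+1,\dots,0,\text{ when }x\in\mathcal{X}^{-,U};$$ and $\mathcal{V}$ is an involution: $\mathcal{V}\circ\mathcal{V}=\mathrm{Id}_{\mathcal{X}^U}$, so $\mathcal{V}^{-1}=\mathcal{V}$.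
   Context: A positive (resp. negative) excursion is a finite integer sequence $x=(x_n:0\le n\le\theta)$ with $x_0=x_\theta=0$, $x_n>0$ (resp. $x_n<0$) for $0<n<\theta$, and jumps $y_n=x_{n+1}-x_n\in\{1,-1\}$; $\theta=\theta(x)$ is its length. The height is $H(x)=\max_n x_n$ for positive and $H(x)=\min_n x_n$ for negative excursions. Level numbers: for positive $x$, $N_h(x)=|\{n\in[0,\theta):y_n=1,x_n=h\}|$ for $h\ge0$; for negative $x$, $N_h(x)=|\{n\in[0,\theta):y_n=-1,x_n=h\}|$ for $h\le0$. $\mathcal{X}^{+,U}$ is the set of positive excursions with $N_{H(x)-1}(x)=1$ and $\mathcal{X}^{-,U}$ the set of negative excursions with $N_{H(x)+1}(x)=1$; equivalently, excursions whose height is attained at a unique time $m\in(0,\theta)$. Vervaat transform: for $x\in\mathcal{X}^U$ with length $\theta$ and unique $m$ such that $x_m=H(x)$, $\mathcal{V}(x)=\hat x$ where $\hat x_n=x_{n+m}-H(x)$ for $0\le n\le\theta-m$ and $\hat x_n=x_{n+m-\theta}-H(x)$ for $\theta-m+1\le n\le\theta$. *)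

(* excursions are sequences of integers x = [:: x_0; ...; x_theta]. *)
From mathcomp Require Import all_boot all_order all_algebra.
Set Implicit Arguments. Unset Strict Implicit. Unset Printing Implicit Defensive.
Import Order.TTheory GRing.Theory Num.Theory.
Local Open Scope ring_scope.

Definition theta (x : seq int) : nat := (size x).-1.

Definition jump (x : seq int) (n : nat) : int := nth 0 x n.+1 - nth 0 x n.

Definition is_exc (pos : bool) (x : seq int) : Prop :=
  [/\ (0 < size x)%N,
      nth 0 x 0 = 0,
      nth 0 x (theta x) = 0,
      (forall n : nat, (0 < n < theta x)%N ->
          if pos then 0 < nth 0 x n else nth 0 x n < 0)
    & (forall n : nat, (n < theta x)%N -> jump x n = 1 \/ jump x n = -1)].

Definition is_pos_exc x := is_exc true x.
Definition is_neg_exc x := is_exc false x.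

(* height: max for positive excursions, min for negative ones.  A nontrivial
   positive excursion has a positive entry, a negative one has none; for the
   trivial excursion both give 0. *)
Definition height (x : seq int) : int :=
  if has (fun v => 0 < v) x then foldr Num.max 0 x else foldr Num.min 0 x.

Definition Npos (x : seq int) (h : int) : nat :=
  count (fun n => (jump x n == 1) && (nth 0 x n == h)) (iota 0 (theta x)).
Definition Nneg (x : seq int) (h : int) : nat :=
  count (fun n => (jump x n == -1) && (nth 0 x n == h)) (iota 0 (theta x)).

Definition XposU (x : seq int) : Prop := is_pos_exc x /\ Npos x (height x - 1) = 1%N.
Definition XnegU (x : seq int) : Prop := is_neg_exc x /\ Nneg x (height x + 1) = 1%N.
Definition XU (x : seq int) : Prop := XposU x \/ XnegU x.

(* Vervaat transform: m = the (unique, for x in XU) time with x_m = H(x);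
   hat x_n = x_{n+m} - H for 0 <= n <= theta - m (= drop m x),
   hat x_n = x_{n+m-theta} - H for theta-m+1 <= n <= theta (indices 1..m). *)
Definition vervaat (x : seq int) : seq int :=
  let H := height x in
  let m := index H x in
  map (fun v => v - H) (drop m x ++ take m (behead x)).

From mathcomp Require Import all_boot all_order all_algebra.
From mathcomp Require Import zify.

Set Implicit Arguments.
Unset Strict Implicit.
Unset Printing Implicit Defensive.

Import Order.TTheory GRing.Theory Num.Theory.

(* A positive excursion x whose maximum H is attained only at time m is a
   closed walk, and V(x) is that walk read cyclically from time m and lowered
   by H.  Reading a closed walk cyclically permutes its steps, so V(x) has the
   same length and unit steps, starts and ends at 0, stays below 0 in between
   (the maximum is unique) and reaches -H where x returns to 0: it is a
   negative excursion of height -H whose level numbers are those of x shifted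
   by H.  In a closed walk the down-steps from level k + 1 are exactly as many
   as the up-steps from level k, which turns the down-step counts of V(x) into
   the up-step counts of x and shows that -H is attained only once.  Reading
   V(x) cyclically again from its minimum completes a full turn, so V(V(x)) = x.
   Negative excursions are handled by negation. *)

Lemma modnDr_inj t m a b :
  (a < t)%N -> (b < t)%N -> (a + m) %% t = (b + m) %% t -> a = b.
Proof. by move=> ? ? /eqP; rewrite eqn_modDr !modn_small // => /eqP. Qed.

Lemma perm_iota_addmod t m :
  (0 < t)%N -> perm_eq [seq (n + m) %% t | n <- iota 0 t] (iota 0 t).
Proof.
move=> t_gt0; have inj : {in iota 0 t &, injective (fun n => (n + m) %% t)}.
  by move=> a b; rewrite !mem_iota => /andP[_ ?] /andP[_ ?]; apply: modnDr_inj.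
have uniq_s : uniq [seq (n + m) %% t | n <- iota 0 t].
  by rewrite (map_inj_in_uniq inj) iota_uniq.
have sub_s : {subset [seq (n + m) %% t | n <- iota 0 t] <= iota 0 t}.
  by move=> _ /mapP[n _ ->]; rewrite mem_iota ltn_pmod.
have [_ eq_s] := uniq_min_size uniq_s sub_s (eq_leq (esym (size_map _ _))).
by rewrite uniq_perm ?iota_uniq.
Qed.

Lemma count_eq1_eq (T : eqType) (P : pred T) s a b :
  count P s = 1 -> a \in s -> b \in s -> P a -> P b -> a = b.
Proof.
move=> cnt sa sb Pa Pb; have : (a \in filter P s) && (b \in filter P s).
  by rewrite !mem_filter Pa Pb sa sb.
move: cnt; rewrite -size_filter; case: (filter P s) => [|c [|//]] // _.
by rewrite !inE => /andP[/eqP-> /eqP->].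
Qed.

Local Open Scope ring_scope.

Lemma size_theta x : (0 < theta x)%N -> size x = (theta x).+1.
Proof. by rewrite /theta; case: (size x). Qed.

Lemma ltn_theta_size x n : (n < theta x)%N -> (n.+1 < size x)%N.
Proof. by rewrite /theta; case: (size x). Qed.

Lemma ltn_size_theta x n : (n < size x)%N -> (n <= theta x)%N.
Proof. by rewrite /theta; case: (size x). Qed.

Definition nsteps (x : seq int) (e h : int) : nat :=
  count (fun n => (jump x n == e) && (nth 0 x n == h)) (iota 0 (theta x)).

Lemma NposE x h : Npos x h = nsteps x 1 h. Proof. by []. Qed.

Lemma NnegE x h : Nneg x h = nsteps x (-1) h. Proof. by []. Qed.

Lemma nsteps_gt0 x e h : (0 < nsteps x e h)%N ->
  exists2 n, (n < theta x)%N & nth 0 x n = h /\ nth 0 x n.+1 = h + e.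
Proof.
rewrite /nsteps -has_count => /hasP[n]; rewrite mem_iota /jump => /andP[_ nt].
by case/andP=> /eqP je /eqP xn; exists n => //; rewrite -je xn addrC subrK.
Qed.

Lemma nsteps_cons a b s e h :
  nsteps [:: a, b & s] e h = addn ((b - a == e) && (a == h))%R (nsteps (b :: s) e h).
Proof. by rewrite /nsteps /theta /= -(addn0 1%N) iotaDl count_map. Qed.

Definition unit_steps (x : seq int) : Prop :=
  forall n : nat, (n < theta x)%N -> jump x n = 1 \/ jump x n = -1.

(* Up- and down-steps across the edge {k, k + 1} alternate along the walk, so
   their numbers differ only by what the endpoints contribute. *)
Lemma nsteps_crossing x k : (0 < size x)%N -> unit_steps x ->
  addn (nsteps x 1 k) (nth 0 x (theta x) <= k)%R =
  addn (nsteps x (-1) (k + 1)) (nth 0 x 0 <= k)%R.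
Proof.
elim: x => [//|a [|b s] IH] _ steps; first by rewrite /nsteps.
have steps' : unit_steps (b :: s) by move=> n n_lt; apply: (steps n.+1).
have := IH isT steps'; have := steps 0%N isT; rewrite !nsteps_cons /jump /=.
move: (nsteps _ 1 k) (nsteps _ (-1) (k + 1)) (nth 0 (b :: s) (theta (b :: s))) => p q l.
lia.
Qed.

Lemma nsteps_down_up x k : (0 < size x)%N -> unit_steps x ->
  nth 0 x 0 = nth 0 x (theta x) -> nsteps x (-1) (k + 1) = nsteps x 1 k.
Proof.
move=> x_gt0 steps xc; apply/eqP.
by rewrite -(eqn_add2r (nth 0 x 0 <= k)%R) {2}xc nsteps_crossing.
Qed.

Definition rotw (m : nat) (x : seq int) : seq int :=
  [seq v - nth 0 x m | v <- drop m x ++ take m (behead x)].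

Lemma vervaatE x : height x \in x -> vervaat x = rotw (index (height x) x) x.
Proof. by move=> Hx; rewrite /vervaat /rotw nth_index. Qed.

Lemma rotw0 x : nth 0 x 0 = 0 -> rotw 0 x = x.
Proof. by move=> x0; rewrite /rotw drop0 take0 cats0 x0 (eq_map (@subr0 _)) map_id. Qed.

Section ClosedWalk.

Variable x : seq int.
Local Notation t := (theta x).
Hypothesis t_gt0 : (0 < t)%N.
Hypothesis x_closed : nth 0 x 0 = nth 0 x t.

Lemma nth_modn n : (n <= t)%N -> nth 0 x (n %% t) = nth 0 x n.
Proof. by rewrite leq_eqVlt => /predU1P[->|/modn_small-> //]; rewrite modnn. Qed.

Lemma size_rotw m : (m <= t)%N -> size (rotw m x) = size x.
Proof.
move=> mt; rewrite size_map size_cat size_drop size_takel ?subnK //.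
  by rewrite size_theta // leqW.
by rewrite size_behead.
Qed.

Lemma theta_rotw m : (m <= t)%N -> theta (rotw m x) = t.
Proof. by move=> mt; rewrite /theta size_rotw. Qed.

Lemma nth_rotw m n : (m <= t)%N -> (n <= t)%N ->
  nth 0 (rotw m x) n = nth 0 x ((n + m) %% t) - nth 0 x m.
Proof.
move=> mt nt; have := size_rotw mt; rewrite size_map size_theta // => sz.
rewrite (nth_map 0) ?sz // nth_cat size_drop size_theta //; case: ltnP => nm.
  by rewrite nth_drop nth_modn addnC //; lia.
rewrite nth_take ?nth_behead; last by lia.
have -> : (n + m = n + m - t + t)%N by lia.
by rewrite modnDr nth_modn; [congr (nth _ _ _ - _); lia | lia].
Qed.

Lemma rotw_start m : (m <= t)%N -> nth 0 (rotw m x) 0 = 0.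
Proof. by move=> mt; rewrite nth_rotw // add0n nth_modn // subrr. Qed.

Lemma rotw_closed m : (m <= t)%N ->
  nth 0 (rotw m x) 0 = nth 0 (rotw m x) (theta (rotw m x)).
Proof.
by move=> mt; rewrite theta_rotw // rotw_start // nth_rotw // modnDl nth_modn // subrr.
Qed.

Lemma jump_rotw m n : (m <= t)%N -> (n < t)%N ->
  jump (rotw m x) n = jump x ((n + m) %% t).
Proof.
move=> mt nt; rewrite /jump !nth_rotw ?(ltnW nt) // addSn -addn1 -modnDml.
by rewrite nth_modn ?addn1 ?ltn_pmod // opprB addrA subrK.
Qed.

Lemma nsteps_rotw m e c : (m <= t)%N ->
  nsteps (rotw m x) e c = nsteps x e (c + nth 0 x m).
Proof.
move=> mt; rewrite /nsteps theta_rotw //.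
rewrite -[RHS](permP (perm_iota_addmod m t_gt0)) count_map.
apply: eq_in_count => n; rewrite mem_iota add0n => /andP[_ nt] /=.
by rewrite jump_rotw // nth_rotw ?(ltnW nt) // (subr_eq _ _ (nth 0 x m)).
Qed.

End ClosedWalk.

Lemma rotw_add x i m : (0 < theta x)%N -> nth 0 x 0 = nth 0 x (theta x) ->
  (i <= theta x)%N -> (m <= theta x)%N ->
  rotw i (rotw m x) = rotw ((i + m) %% theta x) x.
Proof.
move=> t_gt0 xc it mt; have ty := theta_rotw t_gt0 mt.
have y_gt0 : (0 < theta (rotw m x))%N by rewrite ty.
have yc := rotw_closed t_gt0 xc mt.
have iy : (i <= theta (rotw m x))%N by rewrite ty.
have le_mod k : (k %% theta x <= theta x)%N by rewrite ltnW ?ltn_pmod.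
apply: (@eq_from_nth _ 0) => [|n].
  by rewrite (size_rotw y_gt0 iy) (size_rotw t_gt0 mt) (size_rotw t_gt0 (le_mod _)).
rewrite (size_rotw y_gt0 iy) (size_rotw t_gt0 mt) (size_theta t_gt0) ltnS => nt.
rewrite (nth_rotw y_gt0 yc iy) ?ty // !(nth_rotw t_gt0 xc) ?le_mod //.
by rewrite modnDml modnDmr addnA opprB addrA subrK.
Qed.

Definition oppw (x : seq int) : seq int := [seq - v | v <- x].

Lemma size_oppw x : size (oppw x) = size x. Proof. exact: size_map. Qed.

Lemma theta_oppw x : theta (oppw x) = theta x. Proof. by rewrite /theta size_oppw. Qed.

Lemma nth_oppw x n : nth 0 (oppw x) n = - nth 0 x n.
Proof.
case: (ltnP n (size x)) => nx; first by rewrite (nth_map 0).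
by rewrite !nth_default ?oppr0 ?size_oppw.
Qed.

Lemma jump_oppw x n : jump (oppw x) n = - jump x n.
Proof. by rewrite /jump !nth_oppw -opprD. Qed.

Lemma nsteps_oppw x e h : nsteps (oppw x) e h = nsteps x (- e) (- h).
Proof.
rewrite /nsteps theta_oppw; apply: eq_count => n /=.
by rewrite jump_oppw nth_oppw !eqr_oppLR.
Qed.

Lemma oppwK : involutive oppw.
Proof. by move=> x; rewrite /oppw -map_comp map_id_in // => v _ /=; rewrite opprK. Qed.

Lemma foldr_max_oppw x : foldr Num.max 0 (oppw x) = - foldr Num.min 0 x.
Proof. by elim: x => [|a x IH] /=; rewrite ?oppr0 // IH oppr_min. Qed.

Lemma vervaat_oppw x :
  height (oppw x) = - height x -> vervaat (oppw x) = oppw (vervaat x).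
Proof.
move=> hx; rewrite /vervaat hx /oppw (index_map oppr_inj).
rewrite -map_drop behead_map -map_take -map_cat -!map_comp.
by apply: eq_map => v /=; rewrite opprB opprK addrC.
Qed.

Lemma exc_oppw b x : is_exc b x -> is_exc (~~ b) (oppw x).
Proof.
case=> x_gt0 x0 xt xsign steps; split.
- by rewrite size_oppw.
- by rewrite nth_oppw x0 oppr0.
- by rewrite theta_oppw nth_oppw xt oppr0.
- move=> n; rewrite theta_oppw nth_oppw => /xsign.
  by case: (b); rewrite /= ?oppr_lt0 ?oppr_gt0.
- by move=> n; rewrite theta_oppw jump_oppw => /steps[]->; [right | left; rewrite opprK].
Qed.

Lemma exc_eq0 b x n : is_exc b x -> (n < theta x)%N -> nth 0 x n = 0 -> n = 0%N.
Proof.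
case=> _ _ _ xsign _ nt xn; case: (posnP n) => // n_gt0.
by move: (xsign n); rewrite n_gt0 nt xn ltxx; case: (b) => /(_ isT).
Qed.

Lemma pos_exc_ge0 x n : is_pos_exc x -> 0 <= nth 0 x n.
Proof.
case=> _ x0 xt xpos _; case: (posnP n) => [->|n_gt0]; first by rewrite x0.
case: (ltngtP n (theta x)) => [nt|tn|->]; last by rewrite xt.
  by apply/ltW/xpos; rewrite n_gt0.
by rewrite nth_default //; move: tn; rewrite /theta; case: (size x).
Qed.

Lemma neg_exc_le0 x n : is_neg_exc x -> nth 0 x n <= 0.
Proof. by move/(exc_oppw (b := false))/(pos_exc_ge0 n); rewrite nth_oppw oppr_ge0. Qed.

Lemma pos_exc_Npos0 x : is_pos_exc x -> (0 < theta x)%N -> Npos x 0 = 1%N.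
Proof.
move=> xe t_gt0; have [_ x0 _ xpos steps] := xe.
have jump0 : jump x 0 = 1.
  have := pos_exc_ge0 1 xe; case: (steps 0%N t_gt0) => //.
  by rewrite /jump x0 subr0 => ->.
rewrite /Npos -(prednK t_gt0) /= jump0 x0 !eqxx add1n; congr S.
rewrite (@eq_in_count _ _ pred0) ?count_pred0 // => n.
rewrite mem_iota => /andP[n_gt0 nt] /=.
have xn : 0 < nth 0 x n by apply: xpos; rewrite n_gt0 /=; lia.
by rewrite (gt_eqF xn) andbF.
Qed.

Lemma height_nonposE x v : {in x, forall w, w <= 0} -> v \in x ->
  {in x, forall w, v <= w} -> height x = v.
Proof.
move=> xneg vx vmin; rewrite /height ifF; last first.
  by apply/negbTE/hasPn => w /xneg; rewrite leNgt.
rewrite foldrE big_seq; apply: le_anti; rewrite ge_bigmin_seq //=.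
by rewrite le_bigmin ?xneg.
Qed.

Section PositiveExcursion.

Variable x : seq int.
Hypothesis xU : XposU x.
Local Notation t := (theta x).
Local Notation H := (height x).
Local Notation m := (index (height x) x).

Lemma posU_height_max : [/\ 0 < H, H \in x & forall n, nth 0 x n <= H].
Proof.
have [xe N1] := xU.
have N_gt0 : (0 < nsteps x 1 (H - 1))%N by rewrite -NposE N1.
have [n nt [xn]] := nsteps_gt0 N_gt0; rewrite subrK => xn1.
have H_gt0 : 0 < H by have := pos_exc_ge0 n xe; rewrite xn; lia.
have Hx : H \in x by rewrite -xn1 mem_nth // ltn_theta_size.
split=> // k; rewrite /height ifT; last by apply/hasP; exists H.
rewrite foldrE; case: (ltnP k (size x)) => kx; last by rewrite nth_default ?bigmax_ge_id.
exact: (le_bigmax_seq 0 _ xpredT (fun v => v) (mem_nth 0 kx)).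
Qed.

Lemma posU_argmax : [/\ (0 < m)%N, (m < t)%N & nth 0 x m = H].
Proof.
have [H_gt0 Hx _] := posU_height_max; have [[_ x0 xt _ _] _] := xU.
have xm : nth 0 x m = H := nth_index 0 Hx.
have mt : (m <= t)%N by rewrite ltn_size_theta ?index_mem.
split=> //.
  by rewrite lt0n; apply: contraTneq H_gt0 => m0; rewrite -xm m0 x0 ltxx.
by rewrite ltn_neqAle mt andbT; apply: contraTneq H_gt0 => mt'; rewrite -xm mt' xt ltxx.
Qed.

Lemma posU_closed : nth 0 x 0 = nth 0 x t.
Proof. by case: xU => -[_ -> ->]. Qed.

Lemma posU_theta_gt0 : (0 < t)%N.
Proof. by have [m_gt0 mt _] := posU_argmax; apply: ltn_trans mt. Qed.

(* Every visit to H is entered by an up-step from H - 1, and there is only one. *)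
Lemma posU_max_uniq n : (n <= t)%N -> nth 0 x n = H -> n = m.
Proof.
have [H_gt0 _ Hub] := posU_height_max; have [m_gt0 mt xm] := posU_argmax.
have [[_ x0 _ _ steps] N1] := xU; move=> nt xn.
have up_to_top k : (0 < k <= t)%N -> nth 0 x k = H ->
    (jump x k.-1 == 1) && (nth 0 x k.-1 == H - 1).
  move=> /andP[k_gt0 kt] xk; have := Hub k.-1; have := steps k.-1.
  rewrite /jump prednK // xk => /(_ ltac:(lia)) [] j xle; apply/andP; split; apply/eqP; lia.
have mem_pred k : (0 < k <= t)%N -> k.-1 \in iota 0 t by rewrite mem_iota; lia.
have nI : (0 < n <= t)%N.
  by rewrite nt andbT lt0n; apply: contraTneq H_gt0 => n0; rewrite -xn n0 x0 ltxx.
have mI : (0 < m <= t)%N by rewrite m_gt0 ltnW.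
have := count_eq1_eq N1 (mem_pred n nI) (mem_pred m mI) (up_to_top n nI xn) (up_to_top m mI xm).
lia.
Qed.

Lemma posU_vervaatE : vervaat x = rotw m x.
Proof. by have [_ Hx _] := posU_height_max; exact: vervaatE. Qed.

Lemma posU_size_vervaat : size (vervaat x) = t.+1.
Proof.
have [_ mt _] := posU_argmax.
by rewrite posU_vervaatE size_rotw ?size_theta ?posU_theta_gt0 ?(ltnW mt).
Qed.

Lemma posU_theta_vervaat : theta (vervaat x) = t.
Proof. by rewrite /theta posU_size_vervaat. Qed.

Lemma posU_nth_vervaat n : (n <= t)%N ->
  nth 0 (vervaat x) n = nth 0 x ((n + m) %% t) - H.
Proof.
have [_ mt xm] := posU_argmax; have xc := posU_closed.
by move=> nt; rewrite posU_vervaatE nth_rotw ?posU_theta_gt0 ?xm ?(ltnW mt).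
Qed.

Lemma posU_vervaat_bottom : nth 0 (vervaat x) (t - m) = - H.
Proof.
have [_ mt _] := posU_argmax; have [[_ x0 _ _ _] _] := xU.
by rewrite posU_nth_vervaat ?leq_subr // subnK ?(ltnW mt) // modnn x0 sub0r.
Qed.

Lemma posU_mem_vervaat_bottom : - H \in vervaat x.
Proof. by rewrite -posU_vervaat_bottom mem_nth // posU_size_vervaat ltnS leq_subr. Qed.

Lemma posU_vervaat_exc : is_neg_exc (vervaat x).
Proof.
have [_ _ Hub] := posU_height_max; have [_ mt xm] := posU_argmax.
have [[x_gt0 _ _ _ steps] _] := xU; have xc := posU_closed.
have t_gt0 := posU_theta_gt0; have mt' := ltnW mt.
rewrite posU_vervaatE; split.
- by rewrite size_rotw.
- exact: rotw_start.
- by rewrite -rotw_closed // rotw_start.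
- move=> n; rewrite theta_rotw // => /andP[n_gt0 nt].
  rewrite nth_rotw ?(ltnW nt) // xm subr_lt0 lt_neqAle Hub andbT.
  apply/eqP => /(posU_max_uniq (ltnW (ltn_pmod _ t_gt0))) nm.
  suff n0 : n = 0%N by rewrite n0 in n_gt0.
  by apply: (modnDr_inj (m := m) nt t_gt0); rewrite nm add0n modn_small.
- by move=> n; rewrite theta_rotw // => nt; rewrite jump_rotw //; apply/steps/ltn_pmod.
Qed.

Lemma posU_height_vervaat : height (vervaat x) = - H.
Proof.
have [_ _ Hub] := posU_height_max; have [xe _] := xU.
have memV w : w \in vervaat x -> exists2 n, (n <= t)%N & w = nth 0 x ((n + m) %% t) - H.
  case/(nthP 0) => n; rewrite posU_size_vervaat ltnS => nt <-.
  by exists n; rewrite ?posU_nth_vervaat.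
apply: (height_nonposE _ posU_mem_vervaat_bottom) => _ /memV[n _ ->].
  by rewrite subr_le0.
by have := pos_exc_ge0 ((n + m) %% t) xe; lia.
Qed.

Lemma posU_Nneg_vervaat h : Nneg (vervaat x) (- h) = Npos x (H - 1 - h).
Proof.
have [_ mt xm] := posU_argmax; have [[x_gt0 _ _ _ steps] _] := xU.
have xc := posU_closed.
rewrite NnegE NposE posU_vervaatE nsteps_rotw ?posU_theta_gt0 ?(ltnW mt) // xm.
by rewrite -nsteps_down_up //; congr nsteps; lia.
Qed.

Lemma posU_vervaatU : XnegU (vervaat x).
Proof.
split; first exact: posU_vervaat_exc.
rewrite posU_height_vervaat (_ : - H + 1 = - (H - 1)); last by lia.
by rewrite posU_Nneg_vervaat subrr pos_exc_Npos0 ?posU_theta_gt0 //; case: xU.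
Qed.

(* The minimum of V(x) sits at a time i where x is back at 0, i.e. where
   i + m = 0 mod t, so the two rotations compose to a full turn. *)
Lemma posU_vervaatK : vervaat (vervaat x) = x.
Proof.
have [_ mt _] := posU_argmax; have xe : is_exc true x := xU.1; have [_ x0 _ _ _] := xe.
have t_gt0 := posU_theta_gt0; have xc := posU_closed.
have HV : height (vervaat x) \in vervaat x.
  by rewrite posU_height_vervaat posU_mem_vervaat_bottom.
rewrite (vervaatE HV); set i := index _ _.
have it : (i <= t)%N by rewrite -ltnS -posU_size_vervaat index_mem.
have imt0 : ((i + m) %% t = 0)%N.
  apply: (exc_eq0 xe (ltn_pmod _ t_gt0)).
  by have := nth_index 0 HV; rewrite -/i posU_nth_vervaat // posU_height_vervaat; lia.
by rewrite posU_vervaatE rotw_add ?(ltnW mt) // imt0 rotw0.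
Qed.

End PositiveExcursion.

Section NegativeExcursion.

Variable x : seq int.
Hypothesis xU : XnegU x.

Lemma negU_height_oppw : height (oppw x) = - height x.
Proof.
have [xe N1] := xU.
have N_gt0 : (0 < nsteps x (-1) (height x + 1))%N by rewrite -NnegE N1.
have [n nt [xn]] := nsteps_gt0 N_gt0; rewrite addrK => xn1.
have H_lt0 : height x < 0 by have := neg_exc_le0 n xe; rewrite xn; lia.
have Hx : height x \in x by rewrite -xn1 mem_nth // ltn_theta_size.
rewrite /height; have -> : has (fun v => 0 < v) (oppw x).
  by apply/hasP; exists (- height x); [exact: map_f | rewrite oppr_gt0].
have -> : has (fun v => 0 < v) x = false.
  by apply/hasPn => _ /(nthP 0)[k _ <-]; rewrite -leNgt (neg_exc_le0 k xe).
exact: foldr_max_oppw.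
Qed.

Lemma negU_oppw : XposU (oppw x).
Proof.
split; first exact: (exc_oppw (b := false) xU.1).
by rewrite NposE nsteps_oppw negU_height_oppw opprB opprK addrC; case: xU.
Qed.

Lemma negU_vervaat : vervaat x = oppw (vervaat (oppw x)).
Proof. by rewrite -{1}(oppwK x) vervaat_oppw // oppwK negU_height_oppw opprK. Qed.

End NegativeExcursion.

Lemma negU_vervaatU x : XnegU x -> XposU (vervaat x).
Proof. by move=> xU; rewrite negU_vervaat //; apply/negU_oppw/posU_vervaatU/negU_oppw. Qed.

Lemma negU_theta_vervaat x : XnegU x -> theta (vervaat x) = theta x.
Proof.
move=> xU; rewrite negU_vervaat // theta_oppw posU_theta_vervaat ?theta_oppw //.
exact: negU_oppw.
Qed.

Lemma negU_height_vervaat x : XnegU x -> height (vervaat x) = - height x.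
Proof.
move=> xU; have zU := negU_oppw xU; have VzU := posU_vervaatU zU.
by rewrite negU_vervaat // negU_height_oppw // posU_height_vervaat // negU_height_oppw // opprK.
Qed.

Lemma negU_Npos_vervaat x h : XnegU x ->
  Npos (vervaat x) (- h) = Nneg x (height x + 1 - h).
Proof.
move=> xU; have zU := negU_oppw xU.
rewrite negU_vervaat // NposE nsteps_oppw opprK -[h]opprK -NnegE posU_Nneg_vervaat //.
by rewrite NposE nsteps_oppw negU_height_oppw // NnegE; congr nsteps; lia.
Qed.

Lemma negU_vervaatK x : XnegU x -> vervaat (vervaat x) = x.
Proof.
move=> xU; have VzU := posU_vervaatU (negU_oppw xU).
rewrite (negU_vervaat xU) vervaat_oppw; last exact: negU_height_oppw.
by rewrite posU_vervaatK ?oppwK //; exact: negU_oppw.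
Qed.

Lemma XU_vervaat x : XU x -> XU (vervaat x).
Proof. by case=> [/posU_vervaatU | /negU_vervaatU]; [right | left]. Qed.

Lemma XU_vervaatK x : XU x -> vervaat (vervaat x) = x.
Proof. by case=> [/posU_vervaatK | /negU_vervaatK]. Qed.

Lemma XU_theta_vervaat x : XU x -> theta (vervaat x) = theta x.
Proof. by case=> [/posU_theta_vervaat | /negU_theta_vervaat]. Qed.

Lemma XU_height_vervaat x : XU x -> height (vervaat x) = - height x.
Proof. by case=> [/posU_height_vervaat | /negU_height_vervaat]. Qed.

Theorem proposition4 :
  (* V maps X^U into X^U and is a bijection of X^U *)
  (forall x, XU x -> XU (vervaat x)) /\
  (forall x1 x2, XU x1 -> XU x2 -> vervaat x1 = vervaat x2 -> x1 = x2) /\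
  (forall y, XU y -> exists x, XU x /\ vervaat x = y) /\
  (* length and height *)
  (forall x, XU x -> theta (vervaat x) = theta x /\ height (vervaat x) = - height x) /\
  (* sign swap *)
  (forall x, XposU x -> XnegU (vervaat x)) /\
  (forall x, XnegU x -> XposU (vervaat x)) /\
  (* level numbers *)
  (forall x, XposU x -> forall h : int, 0 <= h <= height x - 1 ->
       Nneg (vervaat x) (- h) = Npos x (height x - 1 - h)) /\
  (forall x, XnegU x -> forall h : int, height x + 1 <= h <= 0 ->
       Npos (vervaat x) (- h) = Nneg x (height x + 1 - h)) /\
  (* involution *)
  (forall x, XU x -> vervaat (vervaat x) = x).
Proof.
split; first exact: XU_vervaat.
split; first by move=> x1 x2 x1U x2U eqV; rewrite -(XU_vervaatK x1U) eqV XU_vervaatK.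
split; first by move=> y yU; exists (vervaat y); split; [exact: XU_vervaat | exact: XU_vervaatK].
split; first by move=> x xU; rewrite XU_theta_vervaat ?XU_height_vervaat.
split; first exact: posU_vervaatU.
split; first exact: negU_vervaatU.
split; first by move=> x xU h _; exact: posU_Nneg_vervaat.
split; first by move=> x xU h _; exact: negU_Npos_vervaat.
exact: XU_vervaatK.
Qed.
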